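(* Let $(\Lambda,d)$ be a $k$-graph. Let $\lambda\in\Lambda$ and $(x;(m,n))\in P_\Lambda$ with $m\le d(x)$ and $s(\lambda)=x(m)$, and let $z=\lambda\,\sigma^m x$. Then (i) $z\in\Lambda^{\le\infty}$, and (ii) $(z;(d(\lambda),n-m+d(\lambda)))\sim(x;(m,n))$.
   Context: A $k$-graph $(\Lambda,d)$ is a countable category with a degree functor $d:\Lambda\to\mathbb{N}^k$ satisfying unique factorization (if $d(\lambda)=m+n$ there are unique $\mu,\nu$ with $\lambda=\mu\nu$, $d(\mu)=m$, $d(\nu)=n$); $\Lambda^0$ vertices, $r,s$ range/source, $v\Lambda^n=\{\lambda:r(\lambda)=v,d(\lambda)=n\}$; $e_i$ standard basis, $\le$ coordinatewise, $\vee,\wedge$ coordinatewise max/min. For $m\in(\mathbb{N}\cup\{\infty\})^k$, $\Omega_{k,m}$ is the $k$-graph with objects $\{p\in\mathbb{N}^k:p\le m\}$, morphisms $(p,q)$, $p\le q\le m$, $r(p,q)=p$, $s(p,q)=q$, $d(p,q)=q-p$. A graph morphism $x:\Omega_{k,m}\to\Lambda$ is a degree-preserving functor; $d(x)=m$, $x(a,b)=x((a,b))$, $x(a)=x(a,a)$. It is a boundary path if there is $n_x\in\mathbb{N}^k$, $n_x\le d(x)$, with $x(p)\Lambda^{e_i}=\emptyset$ whenever $p\in\mathbb{N}^k$, $n_x\le p\le d(x)$, $p_i=d(x)_i$; $\Lambda^{\le\infty}$ is the set of boundary paths. $\sigma^px(a,b)=x(a+p,b+p)$ on $\Omega_{k,d(x)-p}$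 for $p\le d(x)$. For $\lambda$ with $s(\lambda)=x(0)$, $\lambda x:\Omega_{k,d(\lambda)+d(x)}\to\Lambda$ is the graph morphism with $(\lambda x)(0,d(\lambda))=\lambda$, $(\lambda x)(0,p)=\lambda\,x(0,p-d(\lambda))$ for $d(\lambda)\le p\le d(\lambda)+d(x)$. $P_\Lambda=\{(x;(m,n)):x\in\Lambda^{\le\infty},m,n\in\mathbb{N}^k,m\le n,n\not\le d(x)\}$, and $(x;(m,n))\sim(y;(p,q))$ iff $x(m\wedge d(x),n\wedge d(x))=y(p\wedge d(y),q\wedge d(y))$, $m-m\wedge d(x)=p-p\wedge d(y)$ and $n-m=q-p$. *)

From Stdlib Require Import ClassicalEpsilon.
From mathcomp Require Import all_boot.

Set Implicit Arguments.
Unset Strict Implicit.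
Unset Printing Implicit Defensive.

Definition nvec (k : nat) := 'I_k -> nat.

Section Vec.
Variable k : nat.
Definition v0 : nvec k := fun _ => 0.
Definition vadd (a b : nvec k) : nvec k := fun i => a i + b i.
Definition vsub (a b : nvec k) : nvec k := fun i => a i - b i. (* truncated *)
Definition vle (a b : nvec k) : Prop := forall i, a i <= b i.
Definition vjoin (a b : nvec k) : nvec k := fun i => maxn (a i) (b i).
Definition vmeet (a b : nvec k) : nvec k := fun i => minn (a i) (b i).
Definition ve (j : 'I_k) : nvec k := fun i => (i == j : nat).
End Vec.

Inductive enat := Fin of nat | Inf.
Definition evec (k : nat) := 'I_k -> enat.

Section EVec.
Variable k : nat.
Definition vle_e (p : nvec k) (m : evec k) : Prop :=
  forall i, match m i with Fin n => p i <= n | Inf => true end.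
Definition vmeet_e (p : nvec k) (m : evec k) : nvec k :=
  fun i => match m i with Fin n => minn (p i) n | Inf => p i end.
Definition vadd_e (p : nvec k) (m : evec k) : evec k :=
  fun i => match m i with Fin n => Fin (p i + n) | Inf => Inf end.
Definition vsub_e (m : evec k) (p : nvec k) : evec k :=
  fun i => match m i with Fin n => Fin (n - p i) | Inf => Inf end.
End EVec.

(** * k-graphs: countable category with degree functor and unique factorization.
    Composition is a total function, only constrained on composable pairs
    (s μ = r ν); [comp μ ν] is the composite μν. *)
Record kgraph (k : nat) := KGraph {
  Obj : Type;
  Mor : Type;
  src : Mor -> Obj;
  rng : Mor -> Obj;
  idm : Obj -> Mor;
  comp : Mor -> Mor -> Mor;
  deg : Mor -> nvec k;
  obj_countable : exists f : Obj -> nat, injective f;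
  mor_countable : exists f : Mor -> nat, injective f;
  rng_idm : forall v, rng (idm v) = v;
  src_idm : forall v, src (idm v) = v;
  rng_comp : forall a b, src a = rng b -> rng (comp a b) = rng a;
  src_comp : forall a b, src a = rng b -> src (comp a b) = src b;
  comp_idl : forall a, comp (idm (rng a)) a = a;
  comp_idr : forall a, comp a (idm (src a)) = a;
  compA : forall a b c, src a = rng b -> src b = rng c ->
    comp (comp a b) c = comp a (comp b c);
  deg_idm : forall v, deg (idm v) = @v0 k;
  deg_comp : forall a b, src a = rng b -> deg (comp a b) = vadd (deg a) (deg b);
  factorization : forall l m n, deg l = vadd m n ->
    exists a b, [/\ src a = rng b, l = comp a b, deg a = m & deg b = n];
  factorization_uniq : forall a b a' b',
    src a = rng b -> src a' = rng b' -> comp a b = comp a' b' ->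
    deg a = deg a' -> deg b = deg b' -> a = a' /\ b = b'
}.

Arguments src {k L} _ : rename.
Arguments rng {k L} _ : rename.
Arguments idm {k L} _ : rename.
Arguments comp {k L} _ _ : rename.
Arguments deg {k L} _ : rename.

Section Paths.
Variables (k : nat) (L : kgraph k).

(** λ(a,b): the factor of λ of degree b - a starting at degree a
    (well defined by unique factorization when a <= b <= d(λ)). *)
Definition seg (l : Mor L) (a b : nvec k) : Mor L :=
  epsilon (inhabits l) (fun nu => exists mu rho,
    [/\ src mu = rng nu, src nu = rng rho, l = comp (comp mu nu) rho,
        deg mu = a & deg nu = vsub b a]).

(** A candidate graph morphism x : Ω_{k,m} -> Λ: its degree m and its
    values x(a,b) on morphisms (a,b) of Ω_{k,m} (values outside the
    domain are irrelevant). The object map is p ↦ r(x(p,p)). *)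
Record kpath := KPath { pdeg : evec k; pmor : nvec k -> nvec k -> Mor L }.

Definition vertex (x : kpath) (p : nvec k) : Obj L := rng (pmor x p p).

Definition is_graph_morphism (x : kpath) : Prop :=
  forall p q t, vle p q -> vle q t -> vle_e t (pdeg x) ->
    [/\ deg (pmor x p q) = vsub q p,
        rng (pmor x p q) = vertex x p,
        src (pmor x p q) = vertex x q,
        pmor x p p = idm (vertex x p)
      & comp (pmor x p q) (pmor x q t) = pmor x p t].

Definition is_boundary_path (x : kpath) : Prop :=
  is_graph_morphism x /\
  exists nx : nvec k, vle_e nx (pdeg x) /\
    forall (p : nvec k) (i : 'I_k), vle nx p -> vle_e p (pdeg x) ->
      pdeg x i = Fin (p i) ->
      forall mu : Mor L, rng mu = vertex x p -> deg mu <> ve i.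

Definition shift (p : nvec k) (x : kpath) : kpath :=
  KPath (vsub_e (pdeg x) p) (fun a b => pmor x (vadd a p) (vadd b p)).

(** concatenation λx, determined by (λx)(0,q) = λ x(0, q - d(λ)) for
    d(λ) <= q: for a general morphism (a,b), (λx)(a,b) is the segment
    (a,b) of (λx)(0, b ∨ d(λ)). *)
Definition concat (l : Mor L) (x : kpath) : kpath :=
  KPath (vadd_e (deg l) (pdeg x))
    (fun a b => seg (comp l (pmor x (@v0 k) (vsub (vjoin b (deg l)) (deg l)))) a b).

Definition in_P (x : kpath) (m n : nvec k) : Prop :=
  [/\ is_boundary_path x, vle m n & ~ vle_e n (pdeg x)].

Definition P_equiv (x : kpath) (m n : nvec k) (y : kpath) (p q : nvec k) : Prop :=
  [/\ in_P x m n, in_P y p q,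
      pmor x (vmeet_e m (pdeg x)) (vmeet_e n (pdeg x))
        = pmor y (vmeet_e p (pdeg y)) (vmeet_e q (pdeg y)),
      vsub m (vmeet_e m (pdeg x)) = vsub p (vmeet_e p (pdeg y))
    & vsub n m = vsub q p].

End Paths.

(* σ^m x is a boundary path whose boundary threshold is shifted down by m.  By unique
   factorization every (λy)(p,q) is the segment (p,q) of the morphism λ y(0, q ∨ d(λ) - d(λ)),
   so λy is a graph morphism, and σ^{d(λ)}(λy) = y; the latter transports the boundary
   condition from y to λy and identifies z(d(λ), n - m + d(λ)) with x(m, n ∧ d(x)). *)
From Pilot Require Import Defs.
From mathcomp Require Import all_boot.
From Stdlib Require Import ClassicalEpsilon FunctionalExtensionality.
From mathcomp Require Import zify.

Set Implicit Arguments.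
Unset Strict Implicit.
Unset Printing Implicit Defensive.

Local Notation comp := Defs.comp.
Local Notation compA := Defs.compA.

Section VectorArithmetic.
Variable k : nat.
Implicit Types (a b m n p q t : nvec k) (e : evec k).

Lemma vext a b : (forall i, a i = b i) -> a = b.
Proof. exact: functional_extensionality. Qed.

Lemma vle_refl p : vle p p.
Proof. by move=> i. Qed.

Lemma vle_trans p q t : vle p q -> vle q t -> vle p t.
Proof. by move=> Hpq Hqt i; apply: leq_trans (Hpq i) (Hqt i). Qed.

Lemma vle0 p : vle (@v0 k) p.
Proof. by []. Qed.

Lemma vle_e_trans q t e : vle q t -> vle_e t e -> vle_e q e.
Proof. by move=> Hqt Ht i; move: (Ht i); case: (e i) => // N; apply: leq_trans (Hqt i). Qed.

Lemma vadd0 a : vadd (@v0 k) a = a.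
Proof. exact: vext. Qed.

Lemma vsubK m n : vle m n -> vadd (vsub n m) m = n.
Proof. by move=> Hmn; apply: vext => i; rewrite /vadd /vsub; have := Hmn i; lia. Qed.

Lemma vle_add2r m p q : vle p q -> vle (vadd p m) (vadd q m).
Proof. by move=> Hpq i; rewrite /vadd; have := Hpq i; lia. Qed.

Lemma vle_e_vaddE a b e : vle_e (vadd b a) (vadd_e a e) <-> vle_e b e.
Proof.
by split=> H i; move: (H i); rewrite /vadd /vadd_e; case: (e i) => //= N; lia.
Qed.

Lemma vle_e_vadd_vsub m t e : vle_e m e -> vle_e t (vsub_e e m) -> vle_e (vadd t m) e.
Proof.
by move=> Hm H i; move: (H i) (Hm i); rewrite /vadd /vsub_e; case: (e i) => //= N; lia.
Qed.

Lemma vle_e_vsub m n e : vle_e m e -> vle_e (vsub n m) (vsub_e e m) -> vle_e n e.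
Proof.
by move=> Hm H i; move: (H i) (Hm i); rewrite /vsub /vsub_e; case: (e i) => //= N; lia.
Qed.

Lemma vle_e_vsub2r m n e : vle_e n e -> vle_e (vsub n m) (vsub_e e m).
Proof. by move=> Hn i; move: (Hn i); rewrite /vsub /vsub_e; case: (e i) => // N; lia. Qed.

Lemma vmeet_e_le n e : vle_e (vmeet_e n e) e.
Proof. by move=> i; rewrite /vmeet_e; case: (e i) => // N; apply: geq_minr. Qed.

Lemma vmeet_e_id m e : vle_e m e -> vmeet_e m e = m.
Proof. by move=> Hm; apply: vext => i; move: (Hm i); rewrite /vmeet_e; case: (e i) => // N; lia. Qed.

Lemma vmeet_e_vadd a b e : vmeet_e (vadd b a) (vadd_e a e) = vadd (vmeet_e b e) a.
Proof. by apply: vext => i; rewrite /vmeet_e /vadd /vadd_e; case: (e i) => // N; lia. Qed.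

Lemma vmeet_e_vsub m n e : vmeet_e (vsub n m) (vsub_e e m) = vsub (vmeet_e n e) m.
Proof. by apply: vext => i; rewrite /vmeet_e /vsub /vsub_e; case: (e i) => // N; lia. Qed.

End VectorArithmetic.

Section Segments.
Variables (k : nat) (L : kgraph k).
Implicit Types (l mu nu rho : Mor L) (a b p q t : nvec k).

Lemma comp_idr_src l mu : src l = rng mu -> comp (comp l mu) (idm (src mu)) = comp l mu.
Proof. by move=> H; rewrite -(src_comp H) comp_idr. Qed.

Lemma factor_at l a : vle a (deg l) ->
  exists mu rho, [/\ src mu = rng rho, l = comp mu rho, deg mu = a & deg rho = vsub (deg l) a].
Proof.
move=> Ha; apply: factorization.
by apply: vext => i; rewrite /vadd /vsub; have := Ha i; lia.
Qed.

Lemma factor_between l a b : vle a b -> vle b (deg l) ->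
  exists mu nu rho, [/\ src mu = rng nu, src nu = rng rho, l = comp (comp mu nu) rho,
     deg mu = a & deg nu = vsub b a] /\ deg rho = vsub (deg l) b.
Proof.
move=> Hab Hb.
have [M [rho [HMrho -> HM Hrho]]] := factor_at Hb.
have [|mu [nu [Hmunu EM Hmu Hnu]]] := factor_at (l := M) (a := a); first by rewrite HM.
exists mu, nu, rho; split=> //; split=> //.
- by rewrite -HMrho EM (src_comp Hmunu).
- by rewrite EM.
- by rewrite Hnu HM.
Qed.

Lemma seg_eq l mu nu rho a b :
  src mu = rng nu -> src nu = rng rho -> l = comp (comp mu nu) rho ->
  deg mu = a -> deg nu = vsub b a -> seg l a b = nu.
Proof.
move=> Hmunu Hnurho El Hmu Hnu; rewrite /seg.
match goal with |- epsilon ?i ?P = _ =>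
  have := epsilon_spec i P
    (ex_intro _ nu (ex_intro _ mu (ex_intro _ rho (And5 Hmunu Hnurho El Hmu Hnu))));
  set e := epsilon i P end.
move=> [mu' [rho' [Hmue Herho El' Hmu' He]]].
have Hs : src (comp mu nu) = rng rho by rewrite (src_comp Hmunu).
have Hs' : src (comp mu' e) = rng rho' by rewrite (src_comp Hmue).
have Hd : deg (comp mu nu) = deg (comp mu' e).
  by rewrite (deg_comp Hmunu) (deg_comp Hmue) Hmu Hnu Hmu' He.
have Hr : deg rho = deg rho'.
  apply: vext => i.
  have := congr1 (fun f => f i) (congr1 deg El); have := congr1 (fun f => f i) (congr1 deg El').
  by rewrite /= (deg_comp Hs) (deg_comp Hs') Hd /vadd; lia.
have [Emunu _] := factorization_uniq Hs Hs' (etrans (esym El) El') Hd Hr.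
have Hmm : deg mu = deg mu' by rewrite Hmu Hmu'.
have Hne : deg nu = deg e by rewrite Hnu He.
by have [_ ->] := factorization_uniq Hmunu Hmue Emunu Hmm Hne.
Qed.

Lemma seg_idm l mu rho p :
  src mu = rng rho -> l = comp mu rho -> deg mu = p -> seg l p p = idm (src mu).
Proof.
move=> Hmurho El Hmu; apply: (seg_eq (mu := mu) (rho := rho)) => //.
- by rewrite rng_idm.
- by rewrite src_idm.
- by rewrite comp_idr.
- by rewrite deg_idm; apply: vext => i; rewrite /vsub /v0 subnn.
Qed.

Lemma seg_compr l nu a b :
  src l = rng nu -> vle a b -> vle b (deg l) -> seg (comp l nu) a b = seg l a b.
Proof.
move=> Hlnu Hab Hb.
have [mu [nu' [rho [[H1 H2 El H4 H5] _]]]] := factor_between Hab Hb.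
rewrite (seg_eq H1 H2 El H4 H5).
have Hs : src (comp mu nu') = rng rho by rewrite (src_comp H1).
have Hrho : src rho = rng nu by rewrite -Hlnu El (src_comp Hs).
apply: (seg_eq (mu := mu) (rho := comp rho nu)) => //.
- by rewrite (rng_comp Hrho).
- by rewrite El (compA Hs Hrho).
Qed.

Definition mor_path l : kpath L := KPath (fun i => Fin (deg l i)) (seg l).

Lemma mor_path_graph_morphism l : is_graph_morphism (mor_path l).
Proof.
move=> p q t Hpq Hqt Htl; rewrite /vertex /=.
have Htl' : vle t (deg l) := Htl.
have [mu1 [nu1 [rho1 [[H1 H2 El H4 H5] H6]]]] := factor_between Hpq (vle_trans Hqt Htl').
have Spq : seg l p q = nu1 := seg_eq H1 H2 El H4 H5.
have Spp : seg l p p = idm (src mu1).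
  apply: (seg_idm (rho := comp nu1 rho1)) H4.
  - by rewrite (rng_comp H2).
  - by rewrite El (compA H1 H2).
have Hs1 : src (comp mu1 nu1) = rng rho1 by rewrite (src_comp H1).
have Sqq : seg l q q = idm (src nu1).
  rewrite -(src_comp H1); apply: (seg_idm Hs1 El).
  by rewrite (deg_comp H1) H4 H5; apply: vext => i; rewrite /vadd /vsub; have := Hpq i; lia.
have [|nu2 [rho2 [G1 Erho1 G3 _]]] := factor_at (l := rho1) (a := vsub t q).
  by rewrite H6 => i; rewrite /vsub; have := Htl' i; have := Hqt i; lia.
have Hn12 : src nu1 = rng nu2 by rewrite H2 Erho1 (rng_comp G1).
have Hs12 : src (comp mu1 nu1) = rng nu2 by rewrite (src_comp H1).
have El2 : l = comp (comp (comp mu1 nu1) nu2) rho2 by rewrite El Erho1 (compA Hs12 G1).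
have Sqt : seg l q t = nu2.
  apply: (seg_eq Hs12 G1 El2) => //.
  by rewrite (deg_comp H1) H4 H5; apply: vext => i; rewrite /vadd /vsub; have := Hpq i; lia.
have Spt : seg l p t = comp nu1 nu2.
  apply: (seg_eq (mu := mu1) (rho := rho2)) => //.
  - by rewrite (rng_comp Hn12).
  - by rewrite (src_comp Hn12).
  - by rewrite El2 (compA H1 Hn12).
  - rewrite (deg_comp Hn12) H5 G3; apply: vext => i; rewrite /vadd /vsub.
    by have := Hpq i; have := Hqt i; lia.
by rewrite Spq Spp Sqq Sqt Spt !rng_idm; split.
Qed.

End Segments.

Section Concatenation.
Variables (k : nat) (L : kgraph k) (lam : Mor L) (y : kpath L).
Hypotheses (Hy : is_graph_morphism y) (Hlam : src lam = vertex y (@v0 k)).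
Implicit Types (a b p q t : nvec k).

Local Notation z := (concat lam y).

(* [(λy)(0, q ∨ d(λ)) = λ y(0, concat_index q)], and [(λy)(p,q)] is the segment
   [(p,q)] of this prefix. *)
Definition concat_index q : nvec k := vsub (vjoin q (deg lam)) (deg lam).
Definition concat_prefix q : Mor L := comp lam (pmor y (@v0 k) (concat_index q)).

Lemma concat_index_vadd b : concat_index (vadd b (deg lam)) = b.
Proof. by apply: vext => i; rewrite /concat_index /vsub /vjoin /vadd; lia. Qed.

Lemma concat_index_le q : vle_e q (pdeg z) -> vle_e (concat_index q) (pdeg y).
Proof.
move=> Hq i; move: (Hq i); rewrite /concat_index /vsub /vjoin /= /vadd_e.
by case: (pdeg y i) => //= N; lia.
Qed.

Lemma concat_index_mono q t : vle q t -> vle (concat_index q) (concat_index t).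
Proof. by move=> Hqt i; rewrite /concat_index /vsub /vjoin; have := Hqt i; lia. Qed.

Lemma deg_concat_prefix q : vle_e q (pdeg z) -> deg (concat_prefix q) = vjoin q (deg lam).
Proof.
move=> Hq; have [D R _ _ _] := Hy (vle0 _) (vle_refl _) (concat_index_le Hq).
have Hc : src lam = rng (pmor y (@v0 k) (concat_index q)) by rewrite R.
rewrite /concat_prefix (deg_comp Hc) D.
by apply: vext => i; rewrite /concat_index /vadd /vsub /vjoin /v0; lia.
Qed.

Lemma src_concat_prefix q : vle_e q (pdeg z) -> src (concat_prefix q) = vertex y (concat_index q).
Proof.
move=> Hq; have [_ R S _ _] := Hy (vle0 _) (vle_refl _) (concat_index_le Hq).
have Hc : src lam = rng (pmor y (@v0 k) (concat_index q)) by rewrite R.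
by rewrite /concat_prefix (src_comp Hc) S.
Qed.

Lemma concat_prefix_comp q t : vle q t -> vle_e t (pdeg z) ->
  concat_prefix t = comp (concat_prefix q) (pmor y (concat_index q) (concat_index t)).
Proof.
move=> Hqt Ht; have Hiqt := concat_index_mono Hqt; have Hit := concat_index_le Ht.
have [_ R1 S1 _ C1] := Hy (vle0 _) Hiqt Hit.
have [_ R2 _ _ _] := Hy Hiqt (vle_refl _) Hit.
have c1 : src lam = rng (pmor y (@v0 k) (concat_index q)) by rewrite R1.
have c2 : src (pmor y (@v0 k) (concat_index q)) = rng (pmor y (concat_index q) (concat_index t)).
  by rewrite S1 R2.
by rewrite /concat_prefix -C1 (compA c1 c2).
Qed.

Lemma pmor_concat p q t : vle p q -> vle q t -> vle_e t (pdeg z) ->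
  pmor z p q = seg (concat_prefix t) p q.
Proof.
move=> Hpq Hqt Ht; have Hq := vle_e_trans Hqt Ht.
have [_ R _ _ _] := Hy (concat_index_mono Hqt) (vle_refl _) (concat_index_le Ht).
have -> : pmor z p q = seg (concat_prefix q) p q by [].
rewrite (concat_prefix_comp Hqt Ht) seg_compr //.
- by rewrite src_concat_prefix // R.
- by rewrite deg_concat_prefix // => i; apply: leq_maxl.
Qed.

Lemma concat_graph_morphism : is_graph_morphism z.
Proof.
move=> p q t Hpq Hqt Ht; have Hpt := vle_trans Hpq Hqt.
have Htl : vle t (deg (concat_prefix t)) by rewrite deg_concat_prefix // => i; apply: leq_maxl.
rewrite /vertex (pmor_concat Hpq Hqt Ht) (pmor_concat (vle_refl p) Hpt Ht).
rewrite (pmor_concat (vle_refl q) Hqt Ht) (pmor_concat Hqt (vle_refl t) Ht).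
rewrite (pmor_concat Hpt (vle_refl t) Ht).
exact: mor_path_graph_morphism Hpq Hqt Htl.
Qed.

Lemma pmor_concat_vadd a b : vle a b -> vle_e b (pdeg y) ->
  pmor z (vadd a (deg lam)) (vadd b (deg lam)) = pmor y a b.
Proof.
move=> Hab Hb.
have Hb' : vle_e (vadd b (deg lam)) (pdeg z) by apply/vle_e_vaddE.
have Ha := vle_e_trans (vle_add2r (deg lam) Hab) Hb'.
have [_ R S _ _] := Hy Hab (vle_refl _) Hb.
rewrite (pmor_concat (vle_add2r _ Hab) (vle_refl _) Hb').
rewrite (concat_prefix_comp (vle_add2r _ Hab) Hb') !concat_index_vadd.
have Hc : src (concat_prefix (vadd a (deg lam))) = rng (pmor y a b).
  by rewrite src_concat_prefix // concat_index_vadd R.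
apply: (seg_eq (rho := idm (vertex y b)) Hc).
- by rewrite S rng_idm.
- by rewrite -S (comp_idr_src Hc).
- by rewrite deg_concat_prefix //; apply: vext => i; rewrite /vjoin /vadd; lia.
- by have [D _ _ _ _] := Hy Hab (vle_refl _) Hb; rewrite D; apply: vext => i; rewrite /vsub /vadd; lia.
Qed.

Lemma concat_boundary_path : is_boundary_path y -> is_boundary_path z.
Proof.
move=> [_ [ny [Hny Hbd]]]; split; first exact: concat_graph_morphism.
exists (vadd ny (deg lam)); split; first exact/vle_e_vaddE.
move=> p i Hp Hpz Hpi mu Hmu; set a := vsub p (deg lam).
have Ep : p = vadd a (deg lam).
  by apply: vext => j; rewrite /a /vadd /vsub; have := Hp j; rewrite /vadd; lia.
have Ha : vle_e a (pdeg y) by apply/(vle_e_vaddE (deg lam)); rewrite -Ep.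
apply: (Hbd a i _ Ha _ mu).
- by move=> j; have := Hp j; rewrite /a /vadd /vsub; lia.
- by move: Hpi; rewrite /= /vadd_e {1}Ep /vadd; case: (pdeg y i) => // N [E]; congr Fin; lia.
- by rewrite Hmu /vertex Ep pmor_concat_vadd.
Qed.

End Concatenation.

Section Shift.
Variables (k : nat) (L : kgraph k) (x : kpath L) (m : nvec k).
Hypothesis Hm : vle_e m (pdeg x).

Lemma shift_graph_morphism : is_graph_morphism x -> is_graph_morphism (shift m x).
Proof.
move=> Hx p q t Hpq Hqt Ht.
have [D R S I C] := Hx _ _ _ (vle_add2r m Hpq) (vle_add2r m Hqt) (vle_e_vadd_vsub Hm Ht).
rewrite /vertex /=; split=> //.
by rewrite D; apply: vext => i; rewrite /vsub /vadd; lia.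
Qed.

Lemma shift_boundary_path : is_boundary_path x -> is_boundary_path (shift m x).
Proof.
move=> [Hx [nx [Hnx Hbd]]]; split; first exact: shift_graph_morphism.
exists (vsub nx m); split.
  by move=> i; move: (Hnx i); rewrite /vsub /= /vsub_e; case: (pdeg x i) => //= N; lia.
move=> p i Hp Hpx Hpi; apply: Hbd (vle_e_vadd_vsub Hm Hpx) _.
- by move=> j; have := Hp j; rewrite /vsub /vadd; lia.
- by move: Hpi (Hm i); rewrite /= /vsub_e /vadd; case: (pdeg x i) => // N [E] HN; congr Fin; lia.
Qed.

Lemma vertex_shift0 : vertex (shift m x) (@v0 k) = vertex x m.
Proof. by rewrite /vertex /= vadd0. Qed.

End Shift.

Theorem proposition3p16 (k : nat) (L : kgraph k) (lam : Mor L)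
    (x : kpath L) (m n : nvec k) :
  in_P x m n -> vle_e m (pdeg x) -> src lam = vertex x m ->
  is_boundary_path (concat lam (shift m x)) /\
  P_equiv (concat lam (shift m x)) (deg lam) (vadd (vsub n m) (deg lam)) x m n.
Proof.
move=> [Hx Hmn Hnx] Hm Hsrc.
have Hy := shift_boundary_path Hm Hx.
have Hlam : src lam = vertex (shift m x) (@v0 k) by rewrite vertex_shift0.
have Hz := concat_boundary_path Hy.1 Hlam Hy.
split=> //; set n' := vmeet_e n (pdeg x).
have Hmn' : vle m n'.
  by move=> i; move: (Hm i) (Hmn i); rewrite /n' /vmeet_e; case: (pdeg x i) => // N; lia.
have Ed : vmeet_e (deg lam) (pdeg (concat lam (shift m x))) = vadd (@v0 k) (deg lam).
  by apply: vext => i; rewrite /vmeet_e /= /vadd_e /vsub_e /vadd /v0; case: (pdeg x i) => // N; lia.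
have Eb : vmeet_e (vadd (vsub n m) (deg lam)) (pdeg (concat lam (shift m x)))
          = vadd (vsub n' m) (deg lam).
  by rewrite vmeet_e_vadd vmeet_e_vsub.
split=> //.
- split=> //; first by move=> i; rewrite /vadd; lia.
  by move/vle_e_vaddE/(vle_e_vsub Hm).
- rewrite Ed Eb (vmeet_e_id Hm) (pmor_concat_vadd Hy.1 Hlam (vle0 _)); last first.
    exact/vle_e_vsub2r/vmeet_e_le.
  by change (pmor x (vadd (@v0 k) m) (vadd (vsub n' m) m) = pmor x m n'); rewrite vadd0 vsubK.
- by rewrite Ed (vmeet_e_id Hm); apply: vext => i; rewrite /vsub /vadd /v0; lia.
- by apply: vext => i; rewrite /vsub /vadd; lia.
Qed.
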